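(* Let $f:\mathbb R^n\to\mathbb R$ be an integrable log-concave function with full-dimensional support. Then for any $\theta\in[0,1]$ and any $t\in(0,1]$, $$\mathcal A_t(f)(0)+_\theta\big(-\mathcal A_t(f)(0)\big)\subseteq\mathcal C_{\theta,t}(f)\subseteq\mathcal A_{t^2}(f)(0)+_{\frac{M_t(f)}{M_{t^2}(f)}\theta}\big(-\mathcal A_{t^2}(f)(0)\big).$$
   Context: For $t\in(0,1]$ and $x\in\mathrm{supp}\,f-\mathrm{supp}\,f$, $\mathcal A_t(f)(x)=\{z\in\mathrm{supp}\,f\cap(x+\mathrm{supp}\,f): f(z)f(z-x)\geq t\Vert f\Vert_\infty^2\}$ (so $\mathcal A_t(f)(0)=\{z:f(z)\geq\sqrt t\Vert f\Vert_\infty\}$); $M_t(f)=\max_{x_0}|\mathcal A_t(f)(x_0)|$ with $|\cdot|$ Lebesgue volume; and $\mathcal C_{\theta,t}(f)=\{x\in\mathrm{supp}\,f-\mathrm{supp}\,f:\ \mathcal A_t(f)(x)\neq\emptyset,\ |\mathcal A_t(f)(x)|\geq\theta M_t(f)\}$. For convex bodies $K,L$ and $\theta\in[0,1]$, the $\theta$-convolution body is $K+_\theta L=\{x\in K+L: |K\cap(x-L)|\geq\theta\max_{z\in\mathbb R^n}|K\cap(z-L)|\}$. *)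

From HB Require Import structures.
From mathcomp Require Import all_boot all_order all_algebra.
From mathcomp Require Import all_classical all_reals all_analysis.
Set Implicit Arguments.
Unset Strict Implicit.
Unset Printing Implicit Defensive.
Import Order.TTheory GRing.Theory Num.Theory.
Import numFieldNormedType.Exports.
Local Open Scope classical_set_scope.
Local Open Scope ring_scope.

Definition box (R : realType) (n : nat) (a b : 'rV[R]_n) : set 'rV[R]_n :=
  [set x | forall i : 'I_n, a ord0 i <= x ord0 i <= b ord0 i].

Definition box_vol (R : realType) (n : nat) (a b : 'rV[R]_n) : R :=
  \prod_(i < n) Num.max 0 (b ord0 i - a ord0 i).

(* n-dimensional Lebesgue (outer) measure |A|: infimum of the total volume of
   countable coverings of A by boxes.  It coincides with the Lebesgue measure
   on Lebesgue measurable sets (all sets below are convex, hence measurable). *)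
Definition vol (R : realType) (n : nat) (A : set 'rV[R]_n) : \bar R :=
  ereal_inf [set s | exists a b : nat -> 'rV[R]_n,
    A `<=` \bigcup_k box (a k) (b k) /\
    s = (\sum_(0 <= k <oo) (box_vol (a k) (b k))%:E)%E].

(* Lebesgue integral of a nonnegative function = (n+1)-dimensional volume of
   the region under its graph. *)
Definition integral_nonneg (R : realType) (n : nat) (f : 'rV[R]_n -> R) : \bar R :=
  vol [set v : 'rV[R]_(n + 1) | exists (x : 'rV[R]_n) (s : R),
        v = row_mx x (\row_(j < 1) s) /\ 0 <= s <= f x].

Definition lc_integrable (R : realType) (n : nat) (f : 'rV[R]_n -> R) : Prop :=
  (integral_nonneg f < +oo)%E.

Definition log_concave (R : realType) (n : nat) (f : 'rV[R]_n -> R) : Prop :=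
  (forall x, 0 <= f x) /\
  forall (x y : 'rV[R]_n) (l : R), 0 <= l <= 1 ->
    f x `^ (1 - l) * f y `^ l <= f ((1 - l) *: x + l *: y).

Definition supp (R : realType) (n : nat) (f : 'rV[R]_n -> R) : set 'rV[R]_n :=
  [set x | 0 < f x].

Definition full_dim (R : realType) (n : nat) (A : set 'rV[R]_n) : Prop :=
  interior A !=set0.

Definition sup_norm (R : realType) (n : nat) (f : 'rV[R]_n -> R) : R :=
  sup (range f).

Definition minkowski_sum (R : realType) (n : nat) (K L : set 'rV[R]_n) : set 'rV[R]_n :=
  [set x + y | x in K & y in L].

Definition refl_set (R : realType) (n : nat) (K : set 'rV[R]_n) : set 'rV[R]_n :=
  [set - y | y in K].

Definition minus_set (R : realType) (n : nat) (x : 'rV[R]_n) (L : set 'rV[R]_n) : set 'rV[R]_n :=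
  [set x - y | y in L].

Definition Aset (R : realType) (n : nat) (f : 'rV[R]_n -> R) (t : R) (x : 'rV[R]_n)
  : set 'rV[R]_n :=
  [set z | supp f z /\ supp f (z - x) /\ f z * f (z - x) >= t * sup_norm f ^+ 2].

Definition Mt (R : realType) (n : nat) (f : 'rV[R]_n -> R) (t : R) : R :=
  fine (ereal_sup [set vol (Aset f t x) | x in [set: 'rV[R]_n]]).

Definition Cset (R : realType) (n : nat) (f : 'rV[R]_n -> R) (theta t : R)
  : set 'rV[R]_n :=
  [set x | minkowski_sum (supp f) (refl_set (supp f)) x /\
           Aset f t x !=set0 /\
           (vol (Aset f t x) >= (theta * Mt f t)%:E)%E].

Definition conv_body (R : realType) (n : nat) (theta : R) (K L : set 'rV[R]_n)
  : set 'rV[R]_n :=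
  [set x | minkowski_sum K L x /\
    (vol (K `&` minus_set x L) >=
     theta%:E * ereal_sup [set vol (K `&` minus_set z L) | z in [set: 'rV[R]_n]])%E].

From HB Require Import structures.
From mathcomp Require Import all_boot all_order all_algebra.
From mathcomp Require Import all_classical all_reals all_analysis.
From mathcomp Require Import lra.
Set Implicit Arguments.
Unset Strict Implicit.
Unset Printing Implicit Defensive.

Import Order.TTheory GRing.Theory Num.Theory.
Local Open Scope classical_set_scope.
Local Open Scope ring_scope.

(* Write A_t for A_t(f) and s for the sup norm of f.  If f(z) and f(z - x) are
   both at least sqrt(t) s, their product is at least t s^2, so
   A_t(0) ∩ (x + A_t(0)) is contained in A_t(x).  Conversely, as f <= s, a
   product f(z) f(z - x) >= t s^2 forces both factors to be at least t s, so
   A_t(x) is contained in A_(t^2)(0) ∩ (x + A_(t^2)(0)).  Log-concavity at the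
   midpoint gives f(z - x/2)^2 >= f(z) f(z - x), i.e. A_t(x) lies in
   x/2 + A_t(0); hence M_t(f) = |A_t(0)|.  Finally, for every K the maximum of
   |K ∩ (z + K)| is |K|, attained at z = 0.  Combining these gives both
   inclusions. *)

Lemma lee_fine (R : numDomainType) (v : \bar R) : (0 <= v)%E -> ((fine v)%:E <= v)%E.
Proof. by case: v => //= _; rewrite leey. Qed.

Lemma fine_div_mul_le (R : numFieldType) (v : \bar R) (a : R) :
  (0 <= v)%E -> 0 <= a -> ((a / fine v)%:E * v <= a%:E)%E.
Proof.
case: v => [r| |] //= r0 a0; last by rewrite invr0 mulr0 mul0e lee_fin.
rewrite -EFinM lee_fin; have [->|rn0] := eqVneq r 0; first by rewrite mulr0.
by rewrite divfK.
Qed.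

Lemma le_mul_of_le_sqr (R : realDomainType) (a b c : R) :
  0 <= a -> 0 <= b -> c <= a ^+ 2 -> c <= b ^+ 2 -> c <= a * b.
Proof.
move=> a0 b0; rewrite !expr2 => ca cb; case: (leP a b) => ab.
  exact: le_trans ca (ler_wpM2l a0 ab).
exact: le_trans cb (ler_wpM2r b0 (ltW ab)).
Qed.

Section Volume.
Variables (R : realType) (n : nat).
Implicit Types (A B K : set 'rV[R]_n).

Lemma vol_ge0 A : (0 <= vol A)%E.
Proof.
apply: le_ereal_inf_tmp => _ [a [b [_ ->]]]; apply: nneseries_ge0 => k _ _.
by rewrite lee_fin; apply: prodr_ge0 => i _; rewrite le_max lexx.
Qed.

Lemma le_vol A B : A `<=` B -> (vol A <= vol B)%E.
Proof.
move=> AB; apply: ereal_inf_le_tmp => _ [a [b [Bab ->]]]; exists a, b; split => //.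
exact: subset_trans Bab.
Qed.

Lemma vol_translate_le (v : 'rV[R]_n) A : (vol [set (v + y)%R | y in A] <= vol A)%E.
Proof.
apply: ereal_inf_le_tmp => _ [a [b [Aab ->]]].
exists (fun k => (v + a k)%R), (fun k => (v + b k)%R); split.
  move=> _ [y Ay <-]; have [k _ hk] := Aab y Ay; exists k => // i.
  by rewrite !mxE !lerD2l; exact: hk.
apply: eq_eseriesr => k _; congr (_%:E); apply: eq_bigr => i _.
by rewrite !mxE opprD addrACA subrr add0r.
Qed.

Lemma minus_refl_setE (x : 'rV[R]_n) K :
  minus_set x (refl_set K) = [set x + y | y in K].
Proof.
apply/seteqP; split => [_ [_ [y Ky <-] <-]|_ [y Ky <-]].
  by exists y; rewrite ?opprK.
by exists (- y); [exists y | rewrite opprK].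
Qed.

Lemma sup_vol_cap_translate K :
  ereal_sup [set vol (K `&` minus_set z (refl_set K)) | z in [set: 'rV[R]_n]] = vol K.
Proof.
apply/eqP; rewrite eq_le; apply/andP; split.
  by apply: ge_ereal_sup => _ [z _ <-]; apply: le_vol; exact: subIsetl.
apply: ereal_sup_ubound; exists 0 => //; rewrite minus_refl_setE setIidl //.
by move=> w Kw; exists w; rewrite ?add0r.
Qed.

End Volume.

Section SuperlevelSets.
Variables (R : realType) (n : nat) (f : 'rV[R]_n -> R).
Implicit Types (theta t : R) (x y z : 'rV[R]_n).

Lemma le_sup_norm_or0 y : f y <= sup_norm f \/ sup_norm f = 0.
Proof.
rewrite /sup_norm; case: (pselect (has_sup (range f))) => [hsup|nsup].
  by left; apply: sup_upper_bound => //; exists y.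
by right; exact: sup_out.
Qed.

Lemma Aset0P t z : Aset f t 0 z <-> 0 < f z /\ t * sup_norm f ^+ 2 <= f z ^+ 2.
Proof.
rewrite /Aset /supp /= subr0 expr2.
by split => [[fz [_ hz]]|[fz hz]].
Qed.

Lemma AsetN t x z : Aset f t x z -> Aset f t (- x) (z - x).
Proof. by move=> [fz [fzx hz]]; rewrite /Aset /= opprK subrK [f _ * _]mulrC. Qed.

Lemma Aset0_cap_translate_sub t x :
  Aset f t 0 `&` [set x + y | y in Aset f t 0] `<=` Aset f t x.
Proof.
move=> z [/Aset0P[fz hz] [y /Aset0P[fy hy] zE]].
rewrite /Aset /=; have -> : z - x = y by rewrite -zE [x + y]addrC addrK.
by split; [|split] => //; exact: le_mul_of_le_sqr (ltW fz) (ltW fy) hz hy.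
Qed.

Lemma Aset_sub_Aset0_sqr t x : 0 <= t -> Aset f t x `<=` Aset f (t ^+ 2) 0.
Proof.
move=> t0 z [fz [fzx hz]]; apply/Aset0P; split => //.
have [fs|->] := le_sup_norm_or0 (z - x); last by rewrite expr0n mulr0 sqr_ge0.
have s0 : 0 < sup_norm f := lt_le_trans fzx fs.
have hts : t * sup_norm f <= f z.
  rewrite -(ler_pM2r s0); apply: le_trans (ler_wpM2l (ltW fz) fs).
  by rewrite -mulrA -expr2.
by rewrite -exprMn; apply: lerXn2r; rewrite ?nnegrE ?mulr_ge0 ?(ltW fz) ?(ltW s0).
Qed.

Lemma Aset_sub_Aset0_cap t x : 0 <= t ->
  Aset f t x `<=` Aset f (t ^+ 2) 0 `&` [set x + y | y in Aset f (t ^+ 2) 0].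
Proof.
move=> t0 z Az; split; first exact: (Aset_sub_Aset0_sqr (x := x) t0).
exists (z - x); last by rewrite addrC subrK.
apply: (Aset_sub_Aset0_sqr (x := - x) t0); exact: AsetN.
Qed.

Hypothesis hlc : log_concave f.

Lemma log_concave_midpoint x y : f x * f y <= f (2^-1 *: (x + y)) ^+ 2.
Proof.
have half01 : 0 <= (2^-1 : R) <= 1 by apply/andP; split; lra.
have := hlc.2 x y _ half01; have -> : (1 - 2^-1 : R) = 2^-1 by lra.
rewrite -scalerDr !powR12_sqrt ?hlc.1 // -sqrtrM ?hlc.1 // => hmid.
rewrite -(sqr_sqrtr (mulr_ge0 (hlc.1 x) (hlc.1 y))).
by apply: lerXn2r; rewrite ?nnegrE ?sqrtr_ge0 ?hlc.1.
Qed.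

Lemma Aset_sub_translate_Aset0 t x :
  Aset f t x `<=` [set 2^-1 *: x + y | y in Aset f t 0].
Proof.
move=> z [fz [fzx hz]]; exists (z - 2^-1 *: x); last by rewrite addrC subrK.
have -> : z - 2^-1 *: x = 2^-1 *: (z + (z - x)).
  rewrite scalerDr scalerBr addrA -scalerDl.
  have -> : (2^-1 + 2^-1 : R) = 1 by lra.
  by rewrite scale1r.
have hmid := log_concave_midpoint z (z - x).
have sqr_gt0 := lt_le_trans (mulr_gt0 fz fzx) hmid.
apply/Aset0P; split; last exact: le_trans hz hmid.
rewrite lt_def hlc.1 andbT; apply: contraTneq sqr_gt0 => ->.
by rewrite expr0n ltxx.
Qed.

Lemma sup_vol_Aset t :
  ereal_sup [set vol (Aset f t x) | x in [set: 'rV[R]_n]] = vol (Aset f t 0).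
Proof.
apply/eqP; rewrite eq_le; apply/andP; split; last by apply: ereal_sup_ubound; exists 0.
apply: ge_ereal_sup => _ [x _ <-].
exact: le_trans (le_vol (@Aset_sub_translate_Aset0 t x)) (vol_translate_le _ _).
Qed.

Lemma MtE t : Mt f t = fine (vol (Aset f t 0)).
Proof. by rewrite /Mt sup_vol_Aset. Qed.

Lemma conv_body_Aset_sub_Cset theta t : 0 <= theta ->
  conv_body theta (Aset f t 0) (refl_set (Aset f t 0)) `<=` Cset f theta t.
Proof.
move=> theta0 x [[a Ka [_ [b Kb <-] <-]]].
rewrite sup_vol_cap_translate minus_refl_setE => hv.
have capx := @Aset0_cap_translate_sub t (a - b).
split; first by exists a; [exact: Ka.1 | exists (- b) => //; exists b => //; exact: Kb.1].
split; first by exists a; apply: capx; split => //; exists b; rewrite ?subrK.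
rewrite MtE EFinM; apply: le_trans (le_vol capx); apply: le_trans hv.
exact: lee_wpmul2l (lee_fine (vol_ge0 _)).
Qed.

Lemma Cset_sub_conv_body_Aset_sqr theta t : 0 <= theta -> 0 <= t ->
  Cset f theta t `<=` conv_body (Mt f t / Mt f (t ^+ 2) * theta)
    (Aset f (t ^+ 2) 0) (refl_set (Aset f (t ^+ 2) 0)).
Proof.
move=> theta0 t0 x [_ [[z Az] hv]].
have [Kz [y Ky yE]] := Aset_sub_Aset0_cap t0 Az.
split; first by exists z => //; exists (- y); [exists y | rewrite -yE addrK].
rewrite sup_vol_cap_translate minus_refl_setE.
apply: le_trans (le_vol (Aset_sub_Aset0_cap t0 (x := x))); apply: le_trans hv.
rewrite [Mt f (t ^+ 2)]MtE mulrAC [Mt f t * _]mulrC.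
by apply: fine_div_mul_le (vol_ge0 _) _; rewrite mulr_ge0 // MtE fine_ge0 // vol_ge0.
Qed.

End SuperlevelSets.

Theorem lemma3p7 (R : realType) (n : nat) (f : 'rV[R]_n -> R)
  (hlc : log_concave f) (hint : lc_integrable f) (hfull : full_dim (supp f))
  (theta t : R) (htheta : 0 <= theta <= 1) (ht : 0 < t <= 1) :
  conv_body theta (Aset f t 0) (refl_set (Aset f t 0)) `<=` Cset f theta t /\
  Cset f theta t `<=`
    conv_body (Mt f t / Mt f (t ^+ 2) * theta)
      (Aset f (t ^+ 2) 0) (refl_set (Aset f (t ^+ 2) 0)).
Proof.
have t0 : 0 <= t by case/andP: ht => /ltW.
have theta0 : 0 <= theta by case/andP: htheta.
split; first exact: conv_body_Aset_sub_Cset.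
exact: Cset_sub_conv_body_Aset_sqr.
Qed.
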